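(* Let $r\geqslant 3$ be an odd integer and let $\Gamma\cong\mathbb{Z}_{2r}\oplus\mathbb{Z}_2\oplus\mathbb{Z}_2\oplus\mathbb{Z}_2$. Then there exists an $\mathrm{MRS}_\Gamma(r,8;2)$ in which every row sum and every column sum equals $0_\Gamma$.
   Context: For an abelian group $\Gamma$ of order $abc$, an $\mathrm{MRS}_\Gamma(a,b;c)$ is a collection of $c$ arrays of size $a\times b$ whose entries are the elements of $\Gamma$, each appearing exactly once and in a unique array, such that there are $\omega,\delta\in\Gamma$ with every row sum (in every array) equal to $\omega$ and every column sum (in every array) equal to $\delta$. *)

From HB Require Import structures.
From mathcomp Require Import all_boot all_order all_algebra.
Set Implicit Arguments. Unset Strict Implicit. Unset Printing Implicit Defensive.
Import GRing.Theory.
Local Open Scope ring_scope.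

(* An MRS_G(a,b;c): c arrays of size a x b, i.e. a map
   A : (array index, row, column) -> G, bijective (each element of G
   appears exactly once, in a unique array), with every row sum equal to
   omega and every column sum equal to delta. *)
Definition is_MRS (G : finZmodType) (a b c : nat)
    (A : 'I_c -> 'I_a -> 'I_b -> G) (omega delta : G) : Prop :=
  bijective (fun t : 'I_c * 'I_a * 'I_b => A t.1.1 t.1.2 t.2) /\
  (forall (k : 'I_c) (i : 'I_a), \sum_(j < b) A k i j = omega) /\
  (forall (k : 'I_c) (j : 'I_b), \sum_(i < a) A k i j = delta).

Definition MRS_exists (G : finZmodType) (a b c : nat) : Prop :=
  exists A omega delta, @is_MRS G a b c A omega delta.

Definition Gamma (r : nat) : Type :=
  ('Z_(2 * r) * 'Z_2 * 'Z_2 * 'Z_2)%type.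

(* Each column of an array is built from a sign e = +-1 and two vectors x, y
   of W = Z_2^4: for r = 2h + 1 its entries in Z x W are
   (0, x + y), (e, x), (-e, y), (2e, x), (-2e, x), ..., (he, x), (-he, x).
   The integer parts of a column cancel and W has exponent 2, so every column
   sums to zero; a row of an array sums to zero as soon as the signs, the x's
   and the y's of that array do.  Sixteen columns can be chosen, eight per
   array, with x, y and x + y injective and with equal signs whenever
   x c = y d; then all 16r entries are distinct.  They lie in the box
   |z| <= h, on which the additive map (z, (b, w)) |-> (2z + rb, w) from
   Z x W to Z_2r x Z_2^3 is injective because r is odd, and phi transports
   the arrays to G. *)

From HB Require Import structures.
From mathcomp Require Import all_boot all_order all_algebra.
From mathcomp Require Import zify.
Set Implicit Arguments. Unset Strict Implicit. Unset Printing Implicit Defensive.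
Import GRing.Theory Num.Theory.
Local Open Scope ring_scope.

Definition coef (i : nat) : int := (-1) ^+ i.+1 * (uphalf i)%:Z.

Lemma coef_pairK m : coef m.*2.+1 + coef m.*2.+2 = 0.
Proof.
rewrite /coef !uphalfE /= doubleK uphalf_double.
by rewrite [(-1) ^+ _.+3]exprS mulN1r mulNr subrr.
Qed.

Lemma sum_coef_odd n : odd n -> \sum_(i < n) coef i = 0.
Proof.
move=> odd_n; rewrite -(odd_double_half n) odd_n add1n.
elim: n./2 => [|m IHm]; first by rewrite big_ord1.
by rewrite doubleS 2!big_ord_recr /= IHm add0r coef_pairK.
Qed.

Lemma normr_coef_sign i a : `|coef i * (-1) ^+ a| = (uphalf i)%:Z.
Proof. by rewrite !normrM !normr_sign mulr1 mul1r. Qed.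

Lemma coef_sign_inj i j (a b : bool) :
  coef i * (-1) ^+ a = coef j * (-1) ^+ b ->
  i = j \/ [&& a != b, i != 0%N & j != 0%N].
Proof.
move=> eq_ij; have [-> | ne_ij] := eqVneq i j; [by left | right].
have /eqP := congr1 Num.norm eq_ij; rewrite !normr_coef_sign eqz_nat => /eqP.
move: eq_ij ne_ij; rewrite /coef -[(-1) ^+ i.+1]signr_odd -[(-1) ^+ j.+1]signr_odd.
rewrite /= !uphalf_half; have := odd_double_half i; have := odd_double_half j.
by case: (odd i) (odd j) a b => [] [] [] [] /=;
  rewrite ?expr0 ?expr1 ?mulN1r ?mul1r ?mulr1 ?mulrN1; lia.
Qed.

Section ColumnExtension.

Variables (V : zmodType) (C : finType) (x y : C -> V) (s : C -> bool).

Definition entry (c : C) (i : nat) : int * V :=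
  (coef i * (-1) ^+ s c,
   if i == 0%N then x c + y c else if i == 2%N then y c else x c).

Lemma entry_bounded c n i : odd n -> (i < n)%N -> `|(entry c i).1| * 2 < n%:Z.
Proof. by rewrite normr_coef_sign; have := uphalfK i; lia. Qed.

Lemma row_sum (J : finType) (F : J -> C) i :
  \sum_j (-1) ^+ s (F j) = 0 :> int -> \sum_j x (F j) = 0 -> \sum_j y (F j) = 0 ->
  \sum_j entry (F j) i = 0.
Proof.
move=> sum_s sum_x sum_y.
rewrite [LHS]surjective_pairing !raddf_sum /= -mulr_sumr sum_s mulr0.
by case: eqP => _; [|case: eqP => _]; rewrite ?big_split /= ?sum_x ?sum_y ?addr0.
Qed.

Lemma column_sum (char2 : forall v : V, v + v = 0) c n :
  odd n -> (3 <= n)%N -> \sum_(i < n) entry c i = 0.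
Proof.
move=> odd_n n_ge3; rewrite [LHS]surjective_pairing !raddf_sum /=.
rewrite -mulr_suml sum_coef_odd // mul0r.
rewrite -(subnKC n_ge3) -(odd_double_half (n - 3)) oddB // odd_n /= add0n.
rewrite big_split_ord /= !big_ord_recl big_ord0 /= sumr_const card_ord.
by rewrite addr0 char2 -mul2n mulrnA mulr2n char2 mul0rn addr0.
Qed.

Hypotheses (x_inj : injective x) (y_inj : injective y)
  (xy_inj : injective (fun c => x c + y c))
  (s_xy : forall c d, x c = y d -> s c = s d).

Lemma entry_inj c d i j : entry c i = entry d j -> c = d /\ i = j.
Proof.
case=> /coef_sign_inj[<- | /and3P[ne_s /negPf i_ne0 /negPf j_ne0]] eq_lab.
  split=> //; move: eq_lab; case: eqP => _; first exact: xy_inj.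
  by case: eqP => _; [exact: y_inj | exact: x_inj].
case/eqP: ne_s; move: eq_lab; rewrite i_ne0 j_ne0.
by case: (i == 2%N) (j == 2%N) => [] [];
  [move/y_inj-> | move/esym/s_xy-> | move/s_xy | move/x_inj->].
Qed.

End ColumnExtension.

Definition W := ('Z_2 * 'Z_2 * 'Z_2 * 'Z_2)%type.

Definition embed (r : nat) (v : int * W) : Gamma r :=
  let: (z, (b, a, c, d)) := v in ((2 * z)%:~R + (r * b)%:R, a, c, d).

Lemma natr_double_Zp r : ((2 * r)%:R : 'Z_(2 * r)) = 0.
Proof. by case: r => [|r]; [rewrite muln0 | apply: pchar_Zp; lia]. Qed.

Lemma embed_is_nmod_morphism r : nmod_morphism (embed r).
Proof.
split=> [|[z1 [[[b1 a1] c1] d1]] [z2 [[[b2 a2] c2] d2]]].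
  by rewrite /= muln0 mulr0 addr0.
rewrite /=; congr (_, _, _, _) => /=.
rewrite mulrDr intrD addrACA -natrD -mulnDr; congr (_ + _).
case: b1 b2 => [[|[|//]] ?] [[|[|//]] ?] //=.
by rewrite muln0 (mulnC r 2) natr_double_Zp.
Qed.

HB.instance Definition _ r :=
  GRing.isNmodMorphism.Build _ _ (embed r) (embed_is_nmod_morphism r).

Lemma Zp_intr_eq0 m (n : int) : (1 < m)%N -> ((n%:~R : 'Z_m) == 0) = (m%:Z %| n)%Z.
Proof.
move=> m_gt1; rewrite dvdzE /=.
suff natr_eq0 k : ((k%:R : 'Z_m) == 0) = (m %| k)%N.
  by case: n => k; rewrite ?NegzE ?intrN ?oppr_eq0 natr_eq0.
by rewrite -val_eqE /= val_Zp_nat.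
Qed.

Lemma double_add_inj (r b1 b2 : nat) (z1 z2 : int) :
  odd r -> (b1 < 2)%N -> (b2 < 2)%N -> `|z1| * 2 < r%:Z -> `|z2| * 2 < r%:Z ->
  ((2 * r)%:Z %| 2 * z1 + (r * b1)%:Z - (2 * z2 + (r * b2)%:Z))%Z ->
  z1 = z2 /\ b1 = b2.
Proof.
move: b1 b2 => [|[|//]] [|[|//]] odd_r _ _ z1_lt z2_lt /dvdzP[q];
  rewrite ?muln0 ?muln1 => eqD.
all: have : (q = 0) \/ (q = 1) \/ (q = -1) by nia.
all: by case=> [|[|]] q_val; rewrite q_val in eqD; lia.
Qed.

Lemma embed_inj r :
  odd r -> {in [pred v : int * W | `|v.1| * 2 < r%:Z] &, injective (embed r)}.
Proof.
move=> odd_r [z1 [[[b1 a1] c1] d1]] [z2 [[[b2 a2] c2] d2]] z1_lt z2_lt eq_v.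
rewrite !inE /= in z1_lt z2_lt.
case: eq_v (congr1 (fun g => g.1.1.1) eq_v) => _ -> -> -> /= /eqP; rewrite -subr_eq0.
rewrite -[(r * b1)%:R]mulrz_nat -[(r * b2)%:R]mulrz_nat -!intrD -intrB.
rewrite Zp_intr_eq0; last by have := odd_gt0 odd_r; lia.
rewrite !natz => /(double_add_inj odd_r (ltn_ord b1) (ltn_ord b2) z1_lt z2_lt).
by case=> -> /val_inj->.
Qed.

(* Column (k, j) is numbered n = 8k + j.  The first coordinate of bits n, the
   one that embed merges into Z_2r, is bit 3 of n, that is k. *)
Definition bits (n : nat) : W :=
  ((odd (n %/ 8))%:R, (odd n)%:R, (odd (n %/ 2))%:R, (odd (n %/ 4))%:R).

Definition tau (n : nat) : nat :=
  nth 0 [:: 4; 6; 7; 5; 8; 12; 9; 13; 0; 10; 1; 11; 2; 15; 3; 14] n.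

Definition neg (n : nat) : bool :=
  nth false [:: false; false; true; true; false; true; false; true;
                false; false; false; false; true; true; true; true] n.

Definition idx (c : 'I_2 * 'I_8) : nat := 8 * c.1 + c.2.

Definition xcol (c : 'I_2 * 'I_8) : W := bits (idx c).
Definition ycol (c : 'I_2 * 'I_8) : W := bits (tau (idx c)).
Definition negcol (c : 'I_2 * 'I_8) : bool := neg (idx c).

Lemma idx_inj : injective idx.
Proof.
move=> [k j] [k' j']; rewrite /idx /= => eq_kj.
have := ltn_ord j; have := ltn_ord j' => lt_j' lt_j.
by congr (_, _); apply: ord_inj; lia.
Qed.

Lemma all_cols2 (P : nat -> nat -> bool) :
  all (fun n => all (P n) (iota 0 16)) (iota 0 16) ->
  forall c d, P (idx c) (idx d).
Proof.
have idx_mem c : idx c \in iota 0 16.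
  rewrite mem_iota /idx; case: c => k j /=.
  by have := ltn_ord k; have := ltn_ord j; lia.
by move=> /allP P_all c d; apply: (allP (P_all _ (idx_mem c))); apply: idx_mem.
Qed.

Lemma injective_cols (T : eqType) (f : nat -> T) :
  all (fun n => all (fun m => (f n == f m) ==> (n == m)) (iota 0 16)) (iota 0 16) ->
  injective (fun c => f (idx c)).
Proof.
move=> /all_cols2 f_inj c d /eqP eq_f; apply: idx_inj; apply/eqP.
by move: (f_inj c d); rewrite eq_f.
Qed.

Lemma xcol_inj : injective xcol.
Proof. by apply: (@injective_cols _ bits); vm_compute. Qed.

Lemma ycol_inj : injective ycol.
Proof. by apply: (@injective_cols _ (fun n => bits (tau n))); vm_compute. Qed.

Lemma xycol_inj : injective (fun c => xcol c + ycol c).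
Proof. by apply: (@injective_cols _ (fun n => bits n + bits (tau n))); vm_compute. Qed.

Lemma negcol_xy c d : xcol c = ycol d -> negcol c = negcol d.
Proof.
have := @all_cols2 (fun n m => (bits n == bits (tau m)) ==> (neg n == neg m)).
by move=> /(_ erefl c d) + eq_b => /implyP/(_ (introT eqP eq_b))/eqP.
Qed.

Lemma block_sums (k : 'I_2) :
  [/\ \sum_(j < 8) (-1) ^+ negcol (k, j) = 0 :> int,
      \sum_(j < 8) xcol (k, j) = 0
    & \sum_(j < 8) ycol (k, j) = 0].
Proof.
case: k => [[|[|//]] ?]; split; rewrite !big_ord_recr big_ord0.
all: by apply/eqP; vm_compute.
Qed.

Lemma addrr_W (v : W) : v + v = 0.
Proof. by apply: addrr_pchar2; vm_compute. Qed.

Theorem lemma4p10 (r : nat) (hr3 : (3 <= r)%N) (hodd : odd r)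
  (G : finZmodType) (phi : {additive Gamma r -> G}) (phi_bij : bijective phi) :
  exists A : 'I_2 -> 'I_r -> 'I_8 -> G, @is_MRS G r 8 2 A 0 0.
Proof.
pose E k i j := embed r (entry xcol ycol negcol (k, j) i).
exists (fun k i j => phi (E k i j)); split; [|split].
- apply: inj_card_bij => [[[k i] j] [[k' i'] j'] /(bij_inj phi_bij)|].
    move/(embed_inj hodd (entry_bounded _ _ _ (k, j) hodd (ltn_ord i))
                         (entry_bounded _ _ _ (k', j') hodd (ltn_ord i'))).
    case/(entry_inj xcol_inj ycol_inj xycol_inj negcol_xy) => [[-> ->]].
    by move/ord_inj->.
  rewrite -(bij_eq_card phi_bij) !card_prod !card_ord.
  by rewrite Zp_cast /Zp_trunc /=; lia.
- move=> k i; have [sum_neg sum_x sum_y] := block_sums k.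
  by rewrite -!raddf_sum (row_sum i sum_neg sum_x sum_y) !raddf0.
- move=> k j; rewrite -!raddf_sum column_sum ?raddf0 //; exact: addrr_W.
Qed.
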